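(* In a phase space $Z_1$, every real number $\mu$ is the exponential growth rate of some solution of the linearized Euler system with initial value in $Z_1$ (i.e. the set of finite exponential growth rates of such solutions is $\mathbb{R}$). Moreover, there exist initial values in $Z_1$ for which the exponential growth rate of the corresponding solution equals $+\infty$.
   Context: Fix constants $U_0,c_0,\rho_0>0$. Linearized Euler system: $\partial_t v_x' + U_0\partial_x v_x' + \frac1{\rho_0}\partial_x p' = 0$, $\partial_t v_y' + U_0\partial_x v_y' + \frac1{\rho_0}\partial_y p' = 0$, $\partial_t v_z' + U_0\partial_x v_z' + \frac1{\rho_0}\partial_z p' = 0$, $\partial_t p' + U_0\partial_xp' + \rho_0c_0^2(\partial_xv_x'+\partial_yv_y'+\partial_zv_z') = 0$. Phase space $Z_1$: fix real constants $k_i,l_i,m_i$ ($i=1,\dots,4$) with $k_1k_2k_3k_4\neq0$ and $\Delta = \frac{c_0\rho_0}{k_3k_4}[r_1(k_2k_3k_4+k_3m_2m_4+k_4l_2l_3) + r_2(k_1k_3k_4+k_3m_1m_4+k_4l_1l_3)]\neq0$, $r_i=\sqrt{k_i^2+l_i^2+m_i^2}$. With $\xi_i=k_ix+l_iy+m_iz$, $Z_1$ is the set of systems $(F,G,H,P)$ of the form $F = k_1f_1(\xi_1)+k_2f_2(\xi_2)+\frac{l_3}{k_3}f_3(\xi_3)+\frac{m_4}{k_4}f_4(\xi_4)$, $G = l_1f_1(\xi_1)+l_2f_2(\xi_2)-f_3(\xi_3)$, $H = m_1f_1(\xi_1)+m_2f_2(\xi_2)-f_4(\xi_4)$, $P =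 -c_0\rho_0r_1f_1(\xi_1)+c_0\rho_0r_2f_2(\xi_2)$ with $f_i:\mathbb{R}\to\mathbb{R}$ continuously differentiable, with the topology of uniform convergence on $\mathbb{R}^3$. The exponential growth rate of a solution $(v_x',v_y',v_z',p')$ is $\nu = \max\{\sup_{(x,y,z)}\limsup_{t\to\infty}\frac{\ln|v_x'(x,y,z,t)|}{t},\ \text{same for } v_y',\ v_z',\ p'\}$. *)

From HB Require Import structures.
From mathcomp Require Import all_boot all_order all_algebra.
From mathcomp Require Import all_classical all_reals all_analysis.
Set Implicit Arguments. Unset Strict Implicit. Unset Printing Implicit Defensive.
Import Order.TTheory GRing.Theory Num.Theory.
Import numFieldNormedType.Exports.
Local Open Scope classical_set_scope.
Local Open Scope ring_scope.

Section Defs.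
Variable R : realType.

(* A field on space-time: (x, y, z, t) |-> value. *)
Definition field4 := R -> R -> R -> R -> R.
Definition field3 := R -> R -> R -> R.

Definition dx (u : field4) : field4 := fun x y z t => derive1 (fun s => u s y z t) x.
Definition dy (u : field4) : field4 := fun x y z t => derive1 (fun s => u x s z t) y.
Definition dz (u : field4) : field4 := fun x y z t => derive1 (fun s => u x y s t) z.
Definition dt (u : field4) : field4 := fun x y z t => derive1 (fun s => u x y z s) t.

Definition uncurry4 (u : field4) : R * R * R * R -> R :=
  fun p => u p.1.1.1 p.1.1.2 p.1.2 p.2.

Definition C1_4 (u : field4) : Prop :=
  (forall x y z t,
     derivable (fun s => u s y z t) x 1 /\ derivable (fun s => u x s z t) y 1 /\
     derivable (fun s => u x y s t) z 1 /\ derivable (fun s => u x y z s) t 1) /\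
  continuous (uncurry4 u) /\
  continuous (uncurry4 (dx u)) /\ continuous (uncurry4 (dy u)) /\
  continuous (uncurry4 (dz u)) /\ continuous (uncurry4 (dt u)).

Definition lin_euler_solution (U0 c0 rho0 : R) (vx vy vz p : field4) : Prop :=
  C1_4 vx /\ C1_4 vy /\ C1_4 vz /\ C1_4 p /\
  forall x y z t,
    dt vx x y z t + U0 * dx vx x y z t + rho0^-1 * dx p x y z t = 0 /\
    dt vy x y z t + U0 * dx vy x y z t + rho0^-1 * dy p x y z t = 0 /\
    dt vz x y z t + U0 * dx vz x y z t + rho0^-1 * dz p x y z t = 0 /\
    dt p x y z t + U0 * dx p x y z t
      + rho0 * c0 ^+ 2 * (dx vx x y z t + dy vy x y z t + dz vz x y z t) = 0.

Definition has_initial_value (vx vy vz p : field4) (F G H P : field3) : Prop :=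
  forall x y z, vx x y z 0 = F x y z /\ vy x y z 0 = G x y z /\
                vz x y z 0 = H x y z /\ p x y z 0 = P x y z.

Definition eln_abs (a : R) : \bar R :=
  if a == 0 then -oo%E else (ln `|a|)%:E.

Definition limsup_pinfty (g : R -> \bar R) : \bar R :=
  limf_esup g (pinfty_nbhs R).

Definition growth_comp (u : field4) : \bar R :=
  ereal_sup [set limsup_pinfty
                   (fun t => (eln_abs (u q.1.1 q.1.2 q.2 t) * (t^-1)%:E)%E)
            | q in [set: R * R * R] ].

Definition growth_rate (vx vy vz p : field4) : \bar R :=
  Order.max (Order.max (growth_comp vx) (growth_comp vy))
            (Order.max (growth_comp vz) (growth_comp p)).

Definition C1_1 (f : R -> R) : Prop :=
  (forall s, derivable f s 1) /\ continuous (derive1 f).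

Definition rnorm (k l m : R) : R := Num.sqrt (k ^+ 2 + l ^+ 2 + m ^+ 2).

Definition Delta_Z1 (c0 rho0 k1 k2 k3 k4 l1 l2 l3 l4 m1 m2 m3 m4 : R) : R :=
  c0 * rho0 / (k3 * k4) *
  (rnorm k1 l1 m1 * (k2 * k3 * k4 + k3 * m2 * m4 + k4 * l2 * l3)
   + rnorm k2 l2 m2 * (k1 * k3 * k4 + k3 * m1 * m4 + k4 * l1 * l3)).

Definition in_Z1 (c0 rho0 k1 k2 k3 k4 l1 l2 l3 l4 m1 m2 m3 m4 : R)
    (F G H P : field3) : Prop :=
  exists f1 f2 f3 f4 : R -> R,
    C1_1 f1 /\ C1_1 f2 /\ C1_1 f3 /\ C1_1 f4 /\
    (let xi1 x y z := k1 * x + l1 * y + m1 * z in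
    let xi2 x y z := k2 * x + l2 * y + m2 * z in
    let xi3 x y z := k3 * x + l3 * y + m3 * z in
    let xi4 x y z := k4 * x + l4 * y + m4 * z in
    (forall x y z,
      F x y z = k1 * f1 (xi1 x y z) + k2 * f2 (xi2 x y z)
                + l3 / k3 * f3 (xi3 x y z) + m4 / k4 * f4 (xi4 x y z)) /\
    (forall x y z,
      G x y z = l1 * f1 (xi1 x y z) + l2 * f2 (xi2 x y z) - f3 (xi3 x y z)) /\
    (forall x y z,
      H x y z = m1 * f1 (xi1 x y z) + m2 * f2 (xi2 x y z) - f4 (xi4 x y z)) /\
    (forall x y z,
      P x y z = - (c0 * rho0 * rnorm k1 l1 m1) * f1 (xi1 x y z)
                + c0 * rho0 * rnorm k2 l2 m2 * f2 (xi2 x y z))).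
End Defs.

From HB Require Import structures.
From mathcomp Require Import all_boot all_order all_algebra.
From mathcomp Require Import all_classical all_reals all_analysis.
From mathcomp Require Import ring lra.
Import Order.TTheory GRing.Theory Num.Theory.
Import numFieldNormedType.Exports.
Local Open Scope ring_scope.
Local Open Scope classical_set_scope.

(* Initial data of Z_1 built from f_3 alone (f_1 = f_2 = f_4 = 0) form a
   vorticity wave: the velocity (l3/k3, -1, 0) g(xi3) is orthogonal to
   (k3, l3, m3), hence divergence free, so it carries no pressure and is merely
   convected by the mean flow.  At a fixed point the solution behaves like
   g(xi3 - U0 k3 t); the profile g(s) = exp(lam s) gives the growth rate
   -lam U0 k3, which is any real number as lam varies, and g(s) = exp(s^2)
   gives +oo. *)

Section plane_waves.
Context {R : realType}.

Definition plane_wave (g : R -> R) (c a b d e : R) : field4 R :=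
  fun x y z t => c * g (a * x + b * y + d * z + e * t).

Lemma is_derive_scale_comp_affine (g phi : R -> R) (c alpha K x : R) :
  (forall s, phi s = alpha * s + K) -> derivable g (phi x) 1 ->
  is_derive x 1 (fun s => c * g (phi s)) (c * alpha * derive1 g (phi x)).
Proof.
move=> /funext -> /derivableP dg.
have daff : is_derive x 1 (fun s => alpha * s + K) alpha.
  have := is_deriveD (is_deriveZ alpha (is_derive_id x 1)) (is_derive_cst K x 1).
  by rewrite /GRing.scale /= mulr1 addr0.
have := is_deriveZ c (@is_derive1_comp _ g _ x _ _ dg daff).
by rewrite derive1E /GRing.scale /= mulrA [c * _ * alpha]mulrAC.
Qed.

Section partials.
Variable g : R -> R.
Hypothesis g_derivable : forall s, derivable g s 1.
Variables c a b d e : R.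

Lemma is_derive_plane_wave (x y z t : R) :
  let w := plane_wave g c a b d e in let w' := plane_wave (derive1 g) in
  [/\ is_derive x 1 (fun s => w s y z t) (w' (c * a) a b d e x y z t),
      is_derive y 1 (fun s => w x s z t) (w' (c * b) a b d e x y z t),
      is_derive z 1 (fun s => w x y s t) (w' (c * d) a b d e x y z t) &
      is_derive t 1 (fun s => w x y z s) (w' (c * e) a b d e x y z t)].
Proof.
split.
- by apply: (@is_derive_scale_comp_affine _ _ _ _ (b * y + d * z + e * t)) => // s; ring.
- by apply: (@is_derive_scale_comp_affine _ _ _ _ (a * x + d * z + e * t)) => // s; ring.
- by apply: (@is_derive_scale_comp_affine _ _ _ _ (a * x + b * y + e * t)) => // s; ring.
- by apply: (@is_derive_scale_comp_affine _ _ _ _ (a * x + b * y + d * z)) => // s; ring.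
Qed.

Lemma dx_plane_wave :
  dx (plane_wave g c a b d e) = plane_wave (derive1 g) (c * a) a b d e.
Proof.
apply/funext=> x; apply/funext=> y; apply/funext=> z; apply/funext=> t.
rewrite /dx derive1E.
by case: (is_derive_plane_wave x y z t) => dw _ _ _; rewrite derive_val.
Qed.

Lemma dy_plane_wave :
  dy (plane_wave g c a b d e) = plane_wave (derive1 g) (c * b) a b d e.
Proof.
apply/funext=> x; apply/funext=> y; apply/funext=> z; apply/funext=> t.
rewrite /dy derive1E.
by case: (is_derive_plane_wave x y z t) => _ dw _ _; rewrite derive_val.
Qed.

Lemma dz_plane_wave :
  dz (plane_wave g c a b d e) = plane_wave (derive1 g) (c * d) a b d e.
Proof.
apply/funext=> x; apply/funext=> y; apply/funext=> z; apply/funext=> t.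
rewrite /dz derive1E.
by case: (is_derive_plane_wave x y z t) => _ _ dw _; rewrite derive_val.
Qed.

Lemma dt_plane_wave :
  dt (plane_wave g c a b d e) = plane_wave (derive1 g) (c * e) a b d e.
Proof.
apply/funext=> x; apply/funext=> y; apply/funext=> z; apply/funext=> t.
rewrite /dt derive1E.
by case: (is_derive_plane_wave x y z t) => _ _ _ dw; rewrite derive_val.
Qed.

End partials.

Lemma continuous_plane_wave (h : R -> R) (c a b d e : R) :
  continuous h -> continuous (uncurry4 (plane_wave h c a b d e)).
Proof.
move=> h_cont q.
have cx : {for q, continuous (fun q : R * R * R * R => q.1.1.1)}.
  exact: continuous_comp (continuous_comp cvg_fst cvg_fst) cvg_fst.
have cy : {for q, continuous (fun q : R * R * R * R => q.1.1.2)}.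
  exact: continuous_comp (continuous_comp cvg_fst cvg_fst) cvg_snd.
have cz : {for q, continuous (fun q : R * R * R * R => q.1.2)}.
  exact: continuous_comp cvg_fst cvg_snd.
have ct : {for q, continuous (fun q : R * R * R * R => q.2)} .
  exact: cvg_snd.
have ck (k : R) : {for q, continuous (fun _ : R * R * R * R => k)} .
  exact: cvg_cst.
have cphase : {for q, continuous (fun q : R * R * R * R =>
    a * q.1.1.1 + b * q.1.1.2 + d * q.1.2 + e * q.2)}.
  by apply: continuousD; [apply: continuousD; [apply: continuousD|]|];
    apply: continuousM => //.
apply: continuousM; first exact: ck.
exact: continuous_comp cphase (h_cont _).
Qed.

Lemma C1_1_continuous {g : R -> R} : C1_1 g -> continuous g.
Proof.
by case=> dg _ s; apply/differentiable_continuous/derivable1_diffP.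
Qed.

Lemma plane_wave_C1 (g : R -> R) (c a b d e : R) :
  C1_1 g -> C1_4 (plane_wave g c a b d e).
Proof.
move=> g_C1; have [dg dg_cont] := g_C1.
split.
  move=> x y z t.
  have := is_derive_plane_wave _ dg c a b d e x y z t.
  move=> /= [] [dwx _] [dwy _] [dwz _] [dwt _].
  exact: (conj dwx (conj dwy (conj dwz dwt))).
rewrite (dx_plane_wave _ dg) (dy_plane_wave _ dg).
rewrite (dz_plane_wave _ dg) (dt_plane_wave _ dg).
have g_cont := C1_1_continuous g_C1.
by split; [|split; [|split; [|split]]]; exact: continuous_plane_wave.
Qed.

Lemma C1_1_is_derive (g g' : R -> R) :
  (forall s : R, is_derive s 1 g (g' s)) -> continuous g' -> C1_1 g.
Proof.
move=> dg g'_cont; split=> [s|]; first by case: (dg s).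
suff -> : derive1 g = g' by [].
by apply/funext=> s; rewrite derive1E derive_val.
Qed.

Lemma C1_1_cst (k : R) : C1_1 (fun _ => k).
Proof. by apply: (C1_1_is_derive _ (fun _ => 0)) => s; exact: cvg_cst. Qed.

Lemma C1_1_expR : C1_1 (@expR R).
Proof. by apply: (C1_1_is_derive _ expR) => s; exact: continuous_expR. Qed.

Lemma C1_1_scale (lam : R) : C1_1 ( *%R lam).
Proof.
apply: (C1_1_is_derive _ (fun _ => lam)); last by move=> s; exact: cvg_cst.
by move=> s; have := is_deriveZ lam (is_derive_id s 1); rewrite /GRing.scale /= mulr1.
Qed.

Lemma C1_1_sqr : C1_1 (fun s : R => s ^+ 2).
Proof.
apply: (C1_1_is_derive _ (fun s => s *+ 2)).
  move=> s; have := is_deriveX 2 (is_derive_id s 1).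
  by rewrite /GRing.scale /= mulr1 expr1 mulr_natl.
by move=> s; apply: continuousD; exact: cvg_id.
Qed.

Lemma C1_1_comp {g h : R -> R} : C1_1 g -> C1_1 h -> C1_1 (g \o h).
Proof.
move=> g_C1 h_C1; have [dg dg_cont] := g_C1; have [dh dh_cont] := h_C1.
apply: (C1_1_is_derive _ (fun s => derive1 g (h s) * derive1 h s)).
  by move=> s; apply: is_derive1_comp; rewrite derive1E; exact: derivableP.
have h_cont := C1_1_continuous h_C1.
move=> s; apply: (@continuousM _ _ (derive1 g \o h) (derive1 h)); last exact: dh_cont.
exact: continuous_comp (h_cont s) (dg_cont _).
Qed.

Lemma limsup_pinfty_le (f : R -> \bar R) (A B : R) :
  (forall t, 0 < t -> (f t <= (A / t + B)%:E)%E) -> (limsup_pinfty f <= B%:E)%E.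
Proof.
move=> f_le; apply/lee_addgt0Pr => eps eps_gt0.
rewrite /limsup_pinfty limf_esupE; apply: ge_ereal_inf.
pose M := `|A| / eps + 1.
exists (ereal_sup (f @` [set t | M < t])).
  by exists [set t | M < t] => //; exists M; split => //; exact: num_real.
apply: ge_ereal_sup => _ [t /= Mt <-].
have A_eps_ge0 : 0 <= `|A| / eps by rewrite divr_ge0 // ltW.
have A_eps_lt_t : `|A| / eps < t by move: Mt; rewrite /M; lra.
have t_gt0 : 0 < t by lra.
apply: le_trans (f_le t t_gt0) _; rewrite -EFinD lee_fin.
suff : A / t <= eps by lra.
rewrite ler_pdivrMr // (le_trans (ler_norm A)) // mulrC -ler_pdivrMr //.
exact: ltW.
Qed.

Lemma limsup_pinfty_ge (f : R -> \bar R) (T0 B : R) :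
  (forall t, T0 < t -> (B%:E <= f t)%E) -> (B%:E <= limsup_pinfty f)%E.
Proof.
move=> f_ge; rewrite /limsup_pinfty limf_esupE.
apply: le_ereal_inf_tmp => _ [V [M [_ MV]] <-].
have [T T0T MT] : exists2 T, T0 < T & M < T.
  exists (Num.max T0 M + 1); rewrite ltr_pwDr // ?le_max ?lexx ?orbT //.
apply: le_ereal_sup_tmp; exists (f T); [exact: imageP (MV _ MT) | exact: f_ge].
Qed.

Lemma limsup_pinfty_linear_ge (f : R -> \bar R) (k : R) : 0 < k ->
  (forall t, 0 < t -> ((k * t)%:E <= f t)%E) -> limsup_pinfty f = +oo%E.
Proof.
move=> k_gt0 f_ge; apply: eq_infty => r.
apply: (@limsup_pinfty_ge f (`|r| / k)) => t rt.
have t_gt0 : 0 < t by apply: le_lt_trans rt; rewrite divr_ge0 // ltW.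
apply: le_trans (f_ge t t_gt0); rewrite lee_fin (le_trans (ler_norm r)) //.
by move: rt; rewrite ltr_pdivrMr // mulrC => /ltW.
Qed.

Lemma eln_abs_mul_expR_le (c u : R) : (eln_abs (c * expR u) <= (ln `|c| + u)%:E)%E.
Proof.
rewrite /eln_abs mulf_eq0 expR_eq0 orbF.
have [->|c_neq0] := eqVneq c 0; first by rewrite leNye.
by rewrite normrM (gtr0_norm (expR_gt0 u)) lnM ?posrE ?normr_gt0 ?expR_gt0 // expRK.
Qed.

Lemma eln_abs_opp_expR (u : R) : eln_abs (- expR u) = u%:E.
Proof. by rewrite /eln_abs oppr_eq0 expR_eq0 normrN (gtr0_norm (expR_gt0 u)) expRK. Qed.

Lemma growth_comp_exp_wave_le (lam c a b d e : R) :
  (growth_comp (plane_wave (expR \o *%R lam) c a b d e) <= (lam * e)%:E)%E.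
Proof.
apply: ge_ereal_sup => _ [[[x y] z] _ <-].
apply: (@limsup_pinfty_le _ (ln `|c| + lam * (a * x + b * y + d * z))) => t t_gt0.
rewrite /plane_wave /=.
apply: le_trans (lee_wpmul2r _ (eln_abs_mul_expR_le _ _)) _.
  by rewrite lee_fin invr_ge0 ltW.
rewrite -EFinM lee_fin le_eqVlt; apply/predU1P; left.
by field; exact: lt0r_neq0.
Qed.

Lemma growth_comp_exp_wave_ge (lam a b d e : R) :
  ((lam * e)%:E <= growth_comp (plane_wave (expR \o *%R lam) (-1) a b d e))%E.
Proof.
apply: le_ereal_sup_tmp; eexists; first by exists (0, 0, 0).
apply: (@limsup_pinfty_ge _ 0) => t t_gt0.
rewrite /plane_wave /= mulN1r eln_abs_opp_expR -EFinM lee_fin le_eqVlt.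
by apply/predU1P; left; field; exact: lt0r_neq0.
Qed.

Lemma growth_comp_gaussian_wave (a b d e : R) : e != 0 ->
  growth_comp (plane_wave (expR \o (fun s => s ^+ 2)) (-1) a b d e) = +oo%E.
Proof.
move=> e_neq0; apply: ereal_supy; exists (0, 0, 0) => //.
apply: (@limsup_pinfty_linear_ge _ (e ^+ 2)) => [|t t_gt0].
  by rewrite exprn_even_gt0.
rewrite /plane_wave /= mulN1r eln_abs_opp_expR -EFinM lee_fin le_eqVlt.
by apply/predU1P; left; field; exact: lt0r_neq0.
Qed.

Definition at_time0 (u : field4 R) : field3 R := fun x y z => u x y z 0.

Section vorticity_wave.
Variables U0 k l m : R.

Definition vorticity_wave (g : R -> R) (c : R) : field4 R :=
  plane_wave g c k l m (- (U0 * k)).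

Lemma vorticity_wave_solution (c0 rho0 : R) (g : R -> R) : k != 0 -> C1_1 g ->
  lin_euler_solution U0 c0 rho0 (vorticity_wave g (l / k)) (vorticity_wave g (-1))
    (vorticity_wave g 0) (vorticity_wave g 0).
Proof.
move=> k_neq0 g_C1; have [dg _] := g_C1.
do 4 (split; first exact: plane_wave_C1).
move=> x y z t; rewrite /vorticity_wave.
rewrite !(dx_plane_wave _ dg) !(dy_plane_wave _ dg).
rewrite !(dz_plane_wave _ dg) !(dt_plane_wave _ dg).
by rewrite /plane_wave !(mul0r, mulr0, addr0); split; [|split; [|split]]; field.
Qed.

Lemma vorticity_wave_in_Z1 (c0 rho0 k1 k2 k4 l1 l2 l4 m1 m2 m4 : R) (g : R -> R) :
  C1_1 g ->
  in_Z1 c0 rho0 k1 k2 k k4 l1 l2 l l4 m1 m2 m m4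
    (at_time0 (vorticity_wave g (l / k))) (at_time0 (vorticity_wave g (-1)))
    (at_time0 (vorticity_wave g 0)) (at_time0 (vorticity_wave g 0)).
Proof.
move=> g_C1; exists (fun _ => 0), (fun _ => 0), g, (fun _ => 0).
split; first exact: C1_1_cst.
split; first exact: C1_1_cst.
split; first exact: g_C1.
split; first exact: C1_1_cst.
rewrite /at_time0 /vorticity_wave /plane_wave /=.
by split; [|split; [|split]] => x y z; rewrite !mulr0 !addr0; ring.
Qed.

Lemma growth_rate_exp_vorticity_wave (lam : R) :
  let w := vorticity_wave (expR \o *%R lam) in
  growth_rate (w (l / k)) (w (-1)) (w 0) (w 0) = (lam * - (U0 * k))%:E.
Proof.
apply/eqP; rewrite eq_le !ge_max !growth_comp_exp_wave_le /=.
by rewrite !le_max growth_comp_exp_wave_ge orbT.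
Qed.

Lemma growth_rate_gaussian_vorticity_wave : U0 * k != 0 ->
  let w := vorticity_wave (expR \o (fun s => s ^+ 2)) in
  growth_rate (w (l / k)) (w (-1)) (w 0) (w 0) = +oo%E.
Proof.
move=> Uk_neq0; apply/eqP.
by rewrite -leye_eq !le_max growth_comp_gaussian_wave ?oppr_eq0 // leey orbT.
Qed.

Lemma vorticity_wave_realizes_growth_rate (c0 rho0 k1 k2 k4 l1 l2 l4 m1 m2 m4 : R)
    (g : R -> R) : k != 0 -> C1_1 g ->
  let w := vorticity_wave g in
  exists (F G H P : field3 R) (vx vy vz p : field4 R),
    in_Z1 c0 rho0 k1 k2 k k4 l1 l2 l l4 m1 m2 m m4 F G H P /\
    lin_euler_solution U0 c0 rho0 vx vy vz p /\
    has_initial_value vx vy vz p F G H P /\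
    growth_rate vx vy vz p = growth_rate (w (l / k)) (w (-1)) (w 0) (w 0).
Proof.
move=> k_neq0 g_C1 w.
exists (at_time0 (w (l / k))), (at_time0 (w (-1))), (at_time0 (w 0)), (at_time0 (w 0)).
exists (w (l / k)), (w (-1)), (w 0), (w 0).
split; first exact: vorticity_wave_in_Z1.
by split; first exact: vorticity_wave_solution.
Qed.

End vorticity_wave.

End plane_waves.

Theorem proposition13 (R : realType) (U0 c0 rho0 : R)
  (k1 k2 k3 k4 l1 l2 l3 l4 m1 m2 m3 m4 : R) :
  0 < U0 -> 0 < c0 -> 0 < rho0 ->
  k1 * k2 * k3 * k4 != 0 ->
  Delta_Z1 c0 rho0 k1 k2 k3 k4 l1 l2 l3 l4 m1 m2 m3 m4 != 0 ->
  (forall mu : R,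
     exists (F G H P : field3 R) (vx vy vz p : field4 R),
       in_Z1 c0 rho0 k1 k2 k3 k4 l1 l2 l3 l4 m1 m2 m3 m4 F G H P /\
       lin_euler_solution U0 c0 rho0 vx vy vz p /\
       has_initial_value vx vy vz p F G H P /\
       growth_rate vx vy vz p = mu%:E) /\
  (exists (F G H P : field3 R) (vx vy vz p : field4 R),
       in_Z1 c0 rho0 k1 k2 k3 k4 l1 l2 l3 l4 m1 m2 m3 m4 F G H P /\
       lin_euler_solution U0 c0 rho0 vx vy vz p /\
       has_initial_value vx vy vz p F G H P /\
       growth_rate vx vy vz p = +oo%E).
Proof.
move=> U0_gt0 _ _ k_neq0 _.
have k3_neq0 : k3 != 0.
  by move: k_neq0; rewrite !mulf_eq0 !negb_or => /andP[/andP[_ ->]].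
have Uk_neq0 : U0 * k3 != 0 by rewrite mulf_neq0 // lt0r_neq0.
have realize g := @vorticity_wave_realizes_growth_rate R U0 k3 l3 m3
  c0 rho0 k1 k2 k4 l1 l2 l4 m1 m2 m4 g k3_neq0.
split=> [mu|].
- have := realize _ (C1_1_comp C1_1_expR (C1_1_scale (mu / - (U0 * k3)))).
  by rewrite /= growth_rate_exp_vorticity_wave divfK // oppr_eq0.
- have := realize _ (C1_1_comp C1_1_expR C1_1_sqr).
  by rewrite /= growth_rate_gaussian_vorticity_wave.
Qed.
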